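(* Let $G$ be a noncyclic finite $p$-group and $N$ a nontrivial normal subgroup of $G$ such that $\eta(G) = \eta(G/N)$. Then: (i) for every normal subgroup $M$ of $G$, either $N \le M$ or $M \subseteq G^-$; (ii) if there exists a maximal cyclic subgroup $\langle x \rangle$ of $G$ that is normal in $G$, then $N \le \langle x \rangle$; in particular $N$ is cyclic.
   Context: A cyclic subgroup $C$ of a group $G$ is maximal cyclic if there is no cyclic subgroup $D$ of $G$ with $C < D$. $\eta(G)$ denotes the number of conjugacy classes of maximal cyclic subgroups of $G$. $G^- = \{ g \in G : \langle g \rangle \text{ is not maximal cyclic in } G\}$. *)

From mathcomp Require Import all_boot all_fingroup all_solvable.
Set Implicit Arguments. Unset Strict Implicit. Unset Printing Implicit Defensive.
Local Open Scope group_scope.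

Section MaxCyclic.
Variable gT : finGroupType.
Implicit Types G C : {set gT}.

Definition max_cyclic (G C : {set gT}) : bool :=
  [max C of D | cyclic D && (D \subset G)].

Definition max_cyclics (G : {set gT}) : {set {set gT}} :=
  [set C : {set gT} | max_cyclic G C].

Definition eta (G : {set gT}) : nat :=
  #|[set C :^: G | C in max_cyclics G]|.

Definition Gminus (G : {set gT}) : {set gT} :=
  [set g in G | ~~ max_cyclic G <[g]>].
End MaxCyclic.

From mathcomp Require Import all_boot all_fingroup all_solvable.
Set Implicit Arguments. Unset Strict Implicit. Unset Printing Implicit Defensive.
Local Open Scope group_scope.

(* Lifting a generator shows that every maximal cyclic subgroup of G/N is D/N
   for some maximal cyclic D of G, so D |-> D/N induces a surjection from the
   G-classes of those maximal cyclic D for which D/N is maximal cyclic onto the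
   classes counted by eta(G/N). Thus eta(G/N) <= eta(G), and equality forces
   C/N to be maximal cyclic for every maximal cyclic C, and the induced map on
   classes to be injective. If <x> is maximal cyclic and n \in N, a maximal
   cyclic D containing xn has D/N >= <xN> = <x>/N, hence D/N = <x>/N, so D is
   conjugate to <x>: xn lies in a conjugate of <x>, and every normal subgroup
   containing x contains N. *)

Section FactoredImage.

Variables (aT rT sT : finType) (k : aT -> rT) (h : aT -> sT) (A : {set aT}).
Hypothesis kh : {in A &, forall a b, k a = k b -> h a = h b}.

(* The map induced by h on k-images; the option type spares a default in sT. *)
Let h' (y : rT) : option sT := omap h [pick a in A | k a == y].

Let h'K : {in A, forall a, h' (k a) = Some (h a)}.
Proof.
move=> a Aa; rewrite /h'; case: pickP => [b /andP[Ab /eqP kba] | /(_ a)].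
  by rewrite /= (kh Ab Aa kba).
by rewrite Aa eqxx.
Qed.

Let imset_h' : h' @: (k @: A) = Some @: (h @: A).
Proof. by rewrite -!imset_comp; apply: eq_in_imset => a /h'K. Qed.

Lemma leq_card_imset_factor : #|h @: A| <= #|k @: A|.
Proof. by rewrite -(card_imset _ (@Some_inj _)) -imset_h' leq_imset_card. Qed.

Lemma card_imset_factor_inj :
  #|k @: A| <= #|h @: A| -> {in A &, forall a b, h a = h b -> k a = k b}.
Proof.
move=> le_kh; have: {in k @: A &, injective h'}.
  apply/imset_injP; rewrite imset_h' card_imset; last exact: Some_inj.
  by rewrite eqn_leq le_kh leq_card_imset_factor.
move=> inj_h' a b Aa Ab hab; apply: inj_h'; rewrite ?imset_f //.
by rewrite !h'K // hab.
Qed.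

End FactoredImage.

Section MaxCyclicTheory.

Variable gT : finGroupType.
Implicit Types G C : {set gT}.

Lemma max_cyclic_group_set G C : max_cyclic G C -> group_set C.
Proof. by move/maxsetp/andP=> []. Qed.

Lemma max_cyclicp G C : max_cyclic G C -> cyclic C && (C \subset G).
Proof.
move=> mcC; have gC := max_cyclic_group_set mcC.
by move: mcC; rewrite -[C]/(gval (Group gC)) => /maxgroupp.
Qed.

Lemma max_cyclic_eq G C (D : {group gT}) :
  max_cyclic G C -> cyclic D -> D \subset G -> C \subset D -> D :=: C.
Proof.
move=> mcC cD sDG sCD; have gC := max_cyclic_group_set mcC.
move: mcC sCD; rewrite -[C]/(gval (Group gC)) => /maxgroupP[_ maxC] sCD.
by rewrite (maxC D) // cD.
Qed.

Lemma max_cyclic_exists (G : {group gT}) x :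
  x \in G -> exists2 D : {group gT}, max_cyclic G D & x \in D.
Proof.
move=> Gx; have cxG : cyclic <[x]> && (<[x]> \subset G).
  by rewrite cycle_cyclic cycle_subG.
have [D mcD sxD] :=
  @maxgroup_exists _ (fun D => cyclic D && (D \subset G)) _ cxG.
by exists D; rewrite // -cycle_subG.
Qed.

Lemma max_cyclicJ (G : {group gT}) C z :
  z \in G -> max_cyclic G C -> max_cyclic G (C :^ z).
Proof.
move=> Gz mcC; have gC := max_cyclic_group_set mcC; set Cg := Group gC.
have /andP[cC sCG] := max_cyclicp mcC.
apply/(@maxgroupP _ _ (Cg :^ z)%G); split.
  by rewrite /= (cyclicJ Cg) cC -(conjGid Gz) conjSg.
move=> D /andP[cD sDG] sCzD.
have DzC : D :^ z^-1 :=: C.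
  apply: (max_cyclic_eq mcC); rewrite /= ?cyclicJ // -?sub_conjg //.
  by rewrite -(conjGid (groupVr Gz)) conjSg.
by apply: val_inj; rewrite /= -DzC conjsgKV.
Qed.

End MaxCyclicTheory.

Section QuotientMaxCyclic.

Variables (gT : finGroupType) (G N : {group gT}).
Hypothesis nsNG : N <| G.

Let nNG : G \subset 'N(N) := normal_norm nsNG.

Lemma quotient_max_cyclic_lift E :
  max_cyclic (G / N) E -> exists2 D : {group gT}, max_cyclic G D & D / N = E.
Proof.
move=> mcE; have /andP[/cyclicP[e defE] sEGN] := max_cyclicp mcE.
have: e \in G / N by rewrite -cycle_subG -defE.
case/morphimP=> y Ny Gy def_e.
have [D mcD Dy] := max_cyclic_exists Gy.
have /andP[cD sDG] := max_cyclicp mcD.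
exists D => //; apply: (max_cyclic_eq mcE).
- exact: quotient_cyclic.
- exact: quotientS.
by rewrite defE def_e -quotient_cycle // quotientS ?cycle_subG.
Qed.

Lemma quotient_conjugatesJ C g :
  g \in G -> ((C :^ g) / N) :^: (G / N) = (C / N) :^: (G / N).
Proof.
move=> Gg; rewrite quotientJ ?(subsetP nNG) // conjugates_conj lcoset_id //.
exact: mem_quotient.
Qed.

Section EqualEta.

Hypothesis eq_eta : eta G = eta (G / N).

Let cls (C : {set gT}) := C :^: G.
Let qcls (C : {set gT}) := (C / N) :^: (G / N).
Let qmax := [set C in max_cyclics G | max_cyclic (G / N) (C / N)].

Let cls_qcls : {in qmax &, forall C D, cls C = cls D -> qcls C = qcls D}.
Proof.
move=> C D _ _ eqCD; have: D \in cls C by rewrite eqCD (orbit_refl 'Js).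
by case/imsetP=> g Gg ->; rewrite /qcls quotient_conjugatesJ.
Qed.

Let card_cls_qmax :
  #|cls @: qmax| = eta G /\ #|cls @: qmax| <= #|qcls @: qmax|.
Proof.
have sub_qcls :
    [set E :^: (G / N) | E in max_cyclics (G / N)] \subset qcls @: qmax.
  apply/subsetP=> X /imsetP[E]; rewrite inE => mcE ->.
  have [D mcD defE] := quotient_max_cyclic_lift mcE.
  by apply/imsetP; exists (gval D); rewrite /qcls ?defE // !inE mcD defE.
have le_etaN := subset_leq_card sub_qcls.
rewrite -[#|_|]/(eta (G / N)) -eq_eta in le_etaN.
have le_qcls := leq_card_imset_factor cls_qcls.
have le_eta : #|cls @: qmax| <= eta G.
  by apply/subset_leq_card/imsetS/subsetP=> C; rewrite inE => /andP[].
split; last exact: leq_trans le_eta le_etaN.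
by apply/eqP; rewrite eqn_leq le_eta (leq_trans le_etaN le_qcls).
Qed.

Lemma max_cyclic_quotient C : max_cyclic G C -> max_cyclic (G / N) (C / N).
Proof.
move=> mcC; have [card_qmax _] := card_cls_qmax.
have: cls C \in cls @: qmax.
  have -> : cls @: qmax = cls @: max_cyclics G.
    apply/eqP; rewrite eqEcard card_qmax leqnn andbT.
    by apply/imsetS/subsetP=> D; rewrite inE => /andP[].
  by rewrite imset_f // inE.
case/imsetP=> D; rewrite inE => /andP[_ mcDN] eqCD.
have: C \in cls D by rewrite -eqCD (orbit_refl 'Js).
case/imsetP=> g Gg ->; rewrite quotientJ ?(subsetP nNG) //.
exact: max_cyclicJ (mem_quotient _ Gg) mcDN.
Qed.

Lemma max_cyclic_quotient_conjugates C D :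
  max_cyclic G C -> max_cyclic G D ->
  (C / N) :^: (G / N) = (D / N) :^: (G / N) -> C :^: G = D :^: G.
Proof.
move=> mcC mcD; have [_ le_cls] := card_cls_qmax.
apply: (card_imset_factor_inj cls_qcls) => //.
  by rewrite !inE mcC max_cyclic_quotient.
by rewrite !inE mcD max_cyclic_quotient.
Qed.

Lemma max_cyclic_mulN_conj x n :
  x \in G -> max_cyclic G <[x]> -> n \in N ->
  exists2 g, g \in G & x * n \in <[x]> :^ g.
Proof.
move=> Gx mcx Nn; have Nx := subsetP nNG x Gx.
have Gxn : x * n \in G by rewrite groupM // (subsetP (normal_sub nsNG)).
have [D mcD Dxn] := max_cyclic_exists Gxn.
have /andP[cD sDG] := max_cyclicp mcD.
have eqDx : D / N = <[x]> / N.
  apply: (max_cyclic_eq (max_cyclic_quotient mcx)).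
  - exact: quotient_cyclic.
  - exact: quotientS.
  by rewrite quotient_cycle // -(coset_kerr x Nn) cycle_subG mem_quotient.
have: gval D \in <[x]> :^: G.
  rewrite -(max_cyclic_quotient_conjugates mcD mcx) ?eqDx //.
  exact: (orbit_refl 'Js).
by case/imsetP=> g Gg eqD; exists g => //; rewrite -eqD.
Qed.

Lemma normal_sub_or_sub_Gminus (M : {group gT}) :
  M <| G -> N \subset M \/ M \subset Gminus G.
Proof.
move=> nsMG; case: (boolP (M \subset Gminus G)) => [|/subsetPn[x Mx]].
  by right.
have Gx := subsetP (normal_sub nsMG) x Mx.
rewrite inE Gx negbK => mcx; left; apply/subsetP=> n Nn.
have [g Gg xnJ] := max_cyclic_mulN_conj Gx mcx Nn.
have sxJM : <[x]> :^ g \subset M.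
  by rewrite -(normsP (normal_norm nsMG) g Gg) conjSg cycle_subG.
by rewrite -(groupMl n Mx) (subsetP sxJM).
Qed.

End EqualEta.
End QuotientMaxCyclic.

Theorem corollary4p6 (gT : finGroupType) (p : nat) (G N : {group gT}) :
  prime p -> p.-group G -> ~~ cyclic G ->
  N <| G -> N :!=: 1 ->
  eta G = eta (G / N) ->
  (forall M : {group gT}, M <| G -> N \subset M \/ M \subset Gminus G) /\
  (forall x : gT, x \in G -> max_cyclic G <[x]> -> <[x]> <| G ->
     N \subset <[x]> /\ cyclic N).
Proof.
move=> _ _ _ nsNG _ eq_eta.
have sub_or_Gminus := normal_sub_or_sub_Gminus nsNG eq_eta.
split=> // x Gx mcx nsxG.
have [sNx | sxGm] := sub_or_Gminus _ nsxG.
  by split; last exact: cyclicS sNx (cycle_cyclic x).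
by move: (subsetP sxGm x (cycle_id x)); rewrite inE Gx mcx.
Qed.
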